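(* For every $n\ge1$, $\Phi_n(x)$ is a polynomial of degree $n+2$, and \[ \Phi_n(2)=\Phi_n'(2)=0,\qquad \Phi_n(-2)=16(n+1)(-1)^n. \]
   Context: $U_n$ is the Chebyshev polynomial of the second kind, $U_n(\cos\theta)=\sin((n+1)\theta)/\sin\theta$, $\tilde U_n(x)=U_n(x/2)$, and $\Phi_n(x)=((n+1)x^2-6x-4n)\tilde U_n(x)+2(x+2)\tilde U_{n-1}(x)+2(x+2)$. *)

From mathcomp Require Import all_boot all_order all_algebra.
Set Implicit Arguments. Unset Strict Implicit. Unset Printing Implicit Defensive.
Import Order.TTheory GRing.Theory Num.Theory.
Local Open Scope ring_scope.

(* Utilde n = U_n(x/2), the rescaled Chebyshev polynomial of the second kind,
   given by its standard recurrence Ut 0 = 1, Ut 1 = X, Ut (n+2) = X Ut(n+1) - Ut n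
   (this is U_n(x/2) since U_{n+2}(y) = 2y U_{n+1}(y) - U_n(y), U_0 = 1, U_1 = 2y). *)
Fixpoint Utilde (R : nzRingType) (n : nat) : {poly R} :=
  match n with
  | 0%N => 1
  | 1%N => 'X
  | S (S m as m1) => 'X * Utilde R m1 - Utilde R m
  end.

Definition Phi (R : comNzRingType) (n : nat) : {poly R} :=
  ((n.+1)%:R *: 'X^2 - 6%:R *: 'X - (4 * n)%:R%:P) * Utilde R n
  + 2%:R *: ('X + 2%:R%:P) * Utilde R n.-1
  + 2%:R *: ('X + 2%:R%:P).

From mathcomp Require Import all_boot all_order all_algebra.
From mathcomp Require Import ring.
Import Order.TTheory GRing.Theory Num.Theory.
Local Open Scope ring_scope.

(* The three-term recurrence of Utilde gives, by two-step induction, the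
   closed forms Utilde_n(2) = n+1, Utilde_n(-2) = (-1)^n (n+1) and
   Utilde_n'(2) = n(n+1)(n+2)/6.  Substituting them into Phi reduces the three
   values to polynomial identities in n.  The degree n+2 is that of the
   quadratic factor times Utilde_n; the remaining terms have degree n. *)

Lemma nat_ind2 (P : nat -> Prop) :
  P 0%N -> P 1%N -> (forall n, P n -> P n.+1 -> P n.+2) -> forall n, P n.
Proof.
move=> P0 P1 PSS n; suff [] : P n /\ P n.+1 by [].
by elim: n => [|n [Pn PSn]]; split=> //; apply: PSS.
Qed.

Section UtildeRing.
Variable R : nzRingType.

Lemma Utilde_SS n : Utilde R n.+2 = 'X * Utilde R n.+1 - Utilde R n.
Proof. by []. Qed.

Lemma size_Utilde n : size (Utilde R n) = n.+1.
Proof.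
elim/nat_ind2: n => [||n IHn IHSn]; [exact: size_poly1 | exact: size_polyX |].
have nz_USn : Utilde R n.+1 != 0 by rewrite -size_poly_eq0 IHSn.
rewrite Utilde_SS -commr_polyX size_polyDl size_mulX ?IHSn //.
by rewrite size_polyN IHn.
Qed.

End UtildeRing.

Section UtildeComRing.
Variable R : comNzRingType.

Lemma horner_Utilde2 n : (Utilde R n).[2%:R] = n.+1%:R.
Proof.
elim/nat_ind2: n => [||n IHn IHSn]; [exact: hornerC | exact: hornerX |].
by rewrite Utilde_SS !hornerE IHn IHSn; ring.
Qed.

Lemma horner_UtildeN2 n : (Utilde R n).[- 2%:R] = (-1) ^+ n * n.+1%:R.
Proof.
elim/nat_ind2: n => [||n IHn IHSn]; [rewrite hornerC; ring | rewrite hornerX; ring |].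
by rewrite Utilde_SS !hornerE IHn IHSn !exprS; ring.
Qed.

Lemma deriv_Utilde2 n : 6%:R * (Utilde R n)^`().[2%:R] = (n * n.+1 * n.+2)%:R.
Proof.
elim/nat_ind2: n => [||n IHn IHSn]; [rewrite derivC horner0; ring |
  rewrite derivX hornerC; ring |].
rewrite Utilde_SS !derivE !hornerE horner_Utilde2.
(* push the factor 6 onto both derivative values so that the IHs apply *)
have -> : forall u d d' : R, 6%:R * (u + 2%:R * d - d') =
    6%:R * u + 2%:R * (6%:R * d) - 6%:R * d' by move=> *; ring.
by rewrite IHn IHSn; ring.
Qed.

Lemma horner_Phi2 n : (Phi R n.+1).[2%:R] = 0.
Proof.
rewrite /Phi [n.+1.-1]/=.
rewrite !(hornerD, hornerN, hornerM, hornerZ, hornerX, hornerC, hornerXn).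
by rewrite !horner_Utilde2; ring.
Qed.

Lemma horner_PhiN2 n : (Phi R n.+1).[- 2%:R] = 16%:R * n.+2%:R * (-1) ^+ n.+1.
Proof.
rewrite /Phi [n.+1.-1]/=.
rewrite !(hornerD, hornerN, hornerM, hornerZ, hornerX, hornerC, hornerXn).
by rewrite !horner_UtildeN2 !exprS; ring.
Qed.

End UtildeComRing.

Lemma deriv_Phi2 (F : fieldType) n : (6%:R : F) != 0 -> (Phi F n.+1)^`().[2%:R] = 0.
Proof.
move=> nz6; have deriv_Utilde2_div k :
    (Utilde F k)^`().[2%:R] = (k * k.+1 * k.+2)%:R / 6%:R.
  by rewrite -deriv_Utilde2 mulrC mulKf.
rewrite /Phi [n.+1.-1]/= !derivE.
rewrite !(hornerD, hornerN, hornerM, hornerZ, hornerX, hornerC, hornerXn, hornerMn).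
by rewrite !horner_Utilde2 !deriv_Utilde2_div; field.
Qed.

Lemma size_quadratic (R : idomainType) (a b c : R) :
  a != 0 -> size (a *: 'X^2 - b *: 'X - c%:P) = 3%N.
Proof.
move=> nz_a; rewrite -addrA size_polyDl size_scale ?size_polyXn //.
rewrite (leq_ltn_trans (size_polyD _ _)) // gtn_max !size_polyN size_polyC.
by rewrite (leq_ltn_trans (size_scale_leq _ _)) ?size_polyX //; case: (c != 0).
Qed.

Lemma size_Phi (R : numDomainType) n : size (Phi R n.+1) = n.+4.
Proof.
rewrite /Phi [n.+1.-1]/=; set quad := _ *: 'X^2 - _ *: 'X - _%:P.
have size_quad : size quad = 3%N by rewrite size_quadratic ?pnatr_eq0.
have size_lin : size (2%:R *: ('X + 2%:R%:P) : {poly R}) = 2%N.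
  by rewrite size_scale ?size_XaddC ?pnatr_eq0.
have size_quad_U : size (quad * Utilde R n.+1) = n.+4.
  by rewrite size_mul ?size_quad ?size_Utilde // -size_poly_eq0 ?size_quad ?size_Utilde.
rewrite -addrA size_polyDl size_quad_U //.
rewrite (leq_ltn_trans (size_polyD _ _)) // gtn_max size_lin andbT.
by rewrite (leq_ltn_trans (size_mul_leq _ _)) // size_lin size_Utilde.
Qed.

Theorem lemma4p9 (R : realFieldType) (n : nat) (hn : (1 <= n)%N) :
  (size (Phi R n)).-1 = n.+2
  /\ (Phi R n).[2%:R] = 0
  /\ (Phi R n)^`().[2%:R] = 0
  /\ (Phi R n).[- 2%:R] = 16%:R * (n.+1)%:R * (-1) ^+ n.
Proof.
case: n hn => [//|n] _.
by rewrite size_Phi horner_Phi2 horner_PhiN2 deriv_Phi2 ?pnatr_eq0.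
Qed.
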